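(* In the setting described in the context, fix $x\in\operatorname{supp}(\mu)$ and assume: (a) $\sup_{|i-j|\le R}|J_{i,j}|<\infty$ for every $R\ge0$; (b) $K_n(x,x)>0$ for all large $n$; (c) for every $N\ge1$, \[ \lim_{n\to\infty}\ \max_{\substack{n-N\le \ell<n\\ n\le \ell'\le n+N}}\frac{|q_\ell(x)\,p_{\ell'}(x)|}{K_n(x,x)}=0. \] Then $\lim_{n\to\infty}G_n[f](x)=f(x)$ for every polynomial $f\in\mathbb{R}[x]$.
   Context: Let $r\ge1$ and let $\mu_1,\dots,\mu_r$ be positive Borel measures on $\mathbb{R}$ with all moments finite, forming a perfect system: for every $\vec n\in\mathbb{N}_0^r$ there is a monic polynomial $P_{\vec n}$ of degree $|\vec n|=n_1+\dots+n_r$ with $\int x^kP_{\vec n}\,d\mu_j=0$ for $0\le k\le n_j-1$, $1\le j\le r$. Type I polynomials $A_{\vec n}=(A_{\vec n,1},\dots,A_{\vec n,r})$: $\deg A_{\vec n,j}\le n_j-1$, $\sum_j\int x^kA_{\vec n,j}\,d\mu_j=0$ for $0\le k\le|\vec n|-2$, and $=1$ for $k=|\vec n|-1$. Let $\mu$ be a positive measure with $\mu_j\ll\mu$, $w_j=d\mu_j/d\mu$, $Q_{\vec n}=\sum_jA_{\vec n,j}w_j$. Fix a path $(\vec n_\ell)_{\ell\ge0}$ with $|\vec n_\ell|=\ell$, $\vec n_{\ell+1}=\vec n_\ell+\vec e_{i_\ell}$ ($\vec e_j$ the $j$-th unit vector), and set $p_\ell=P_{\vec n_\ell}$, $q_\ell=Q_{\vec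 n_{\ell+1}}$, so that $\int p_\ell q_{\ell'}\,d\mu=\delta_{\ell,\ell'}$. The Christoffel--Darboux kernel is $K_n(x,y)=\sum_{j=0}^{n-1}p_j(x)q_j(y)$. The matrix $J=[J_{\ell,k}]_{\ell,k\ge0}$ is defined by $xp_\ell=\sum_{k=0}^{\ell+1}J_{\ell,k}p_k$, $J_{\ell,k}=0$ for $k>\ell+1$. For bounded measurable $f$ (or polynomial $f$), $x\in\operatorname{supp}(\mu)$ with $K_n(x,x)\ne0$, define $G_n[f](x)=\frac{1}{K_n(x,x)}\int_{\mathbb{R}}K_n(x,y)K_n(y,x)f(y)\,d\mu(y)$. *)

From HB Require Import structures.
From mathcomp Require Import all_boot all_order all_algebra.
From mathcomp Require Import all_classical all_reals all_analysis.
Set Implicit Arguments. Unset Strict Implicit. Unset Printing Implicit Defensive.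
Import Order.TTheory GRing.Theory Num.Theory.
Import numFieldNormedType.Exports.
Local Open Scope classical_set_scope.
Local Open Scope ring_scope.

Section MOP.
Variable R : realType.
Local Notation RB := (measurableTypeR R).
Local Notation measR := {measure set RB -> \bar R}.
Variable r : nat.

Definition msize (n : 'I_r -> nat) : nat := (\sum_(j < r) n j)%N.

Definition typeII (muj : 'I_r -> measR) (n : 'I_r -> nat) (P : {poly R}) :=
  [/\ P \is monic, size P = (msize n).+1 &
      forall (j : 'I_r) (k : nat), (k < n j)%N ->
        (\int[muj j]_y ((y : R) ^+ k * P.[y])%:E = 0)%E].

Definition perfect (muj : 'I_r -> measR) :=
  forall n : 'I_r -> nat, exists P : {poly R}, typeII muj n P.

Definition typeI (muj : 'I_r -> measR) (n : 'I_r -> nat)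
    (A : 'I_r -> {poly R}) :=
  (forall j, (size (A j) <= n j)%N) /\
  forall k : nat, (k < msize n)%N ->
    (\sum_(j < r) \int[muj j]_y ((y : R) ^+ k * (A j).[y])%:E
       = (if k == (msize n).-1 then 1 else 0)%:E)%E.

Definition Qfun (w : 'I_r -> R -> R) (A : 'I_r -> {poly R}) (y : R) : R :=
  \sum_(j < r) (A j).[y] * w j y.

(** The path: n_0 = 0, n_{l+1} = n_l + e_{i_l}; so (n_l)_j = #{k < l | i_k = j}. *)
Definition pathidx (i : nat -> 'I_r) (l : nat) : 'I_r -> nat :=
  fun j => (\sum_(k < l) (i k == j))%N.

Definition pseq (P : ('I_r -> nat) -> {poly R}) (i : nat -> 'I_r) (l : nat)
  : {poly R} := P (pathidx i l).

Definition qseq (A : ('I_r -> nat) -> 'I_r -> {poly R}) (w : 'I_r -> R -> R)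
    (i : nat -> 'I_r) (l : nat) (y : R) : R :=
  Qfun w (A (pathidx i l.+1)) y.

Definition CDkernel P A w i (n : nat) (x y : R) : R :=
  \sum_(j < n) (pseq P i j).[x] * qseq A w i j y.

Definition Gop (mu : measR) P A w i (n : nat) (f : {poly R}) (x : R) : R :=
  (CDkernel P A w i n x x)^-1 *
  Rintegral mu setT (fun y : R =>
     CDkernel P A w i n x y * CDkernel P A w i n y x * f.[y]).

End MOP.

Definition in_msupp (R : realType)
    (mu : {measure set (measurableTypeR R) -> \bar R}) (x : R) : Prop :=
  forall e : R, 0 < e -> (0 < mu [set y : R | (x - e < y < x + e)%R])%E.

From HB Require Import structures.
From mathcomp Require Import all_boot all_order all_algebra.
From mathcomp Require Import all_classical all_reals all_analysis.
From mathcomp Require Import measurable_realfun ring zify.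
Set Implicit Arguments.
Unset Strict Implicit.
Unset Printing Implicit Defensive.
Import Order.TTheory GRing.Theory Num.Theory.
Import numFieldNormedType.Exports.
Local Open Scope classical_set_scope.
Local Open Scope ring_scope.

(** Biorthogonality, [\int p_m q_l dmu = (m == l)], turns the kernel integral into
    linear algebra. Write [f p_k = \sum_t f(J)_(k,t) p_t]; then
    [\int K_n(x,y) K_n(y,x) f(y) dmu(y) = \sum_(j,k < n) p_j(x) q_k(x) f(J)_(k,j)],
    while [f(x) K_n(x,x) = \sum_(k < n) \sum_t q_k(x) f(J)_(k,t) p_t(x)]. As [J] is
    lower Hessenberg, [f(J)_(k,t) = 0] for [t >= k + size f], so the difference only
    involves the pairs [n - size f <= k < n <= t < n + size f]; there the entries
    of [f(J)] are bounded by (a), and after division by [K_n(x,x) > 0] hypothesis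
    (c) makes the error vanish. *)

Lemma sumr_widen {V : nmodType} (F : nat -> V) {n N : nat} : (n <= N)%N ->
  (forall t, (n <= t)%N -> F t = 0) -> \sum_(t < n) F t = \sum_(t < N) F t.
Proof.
move=> nN F0; rewrite (big_ord_widen N _ nN) big_mkcond.
by apply: eq_bigr => t _; case: ltnP => // /F0 ->.
Qed.

Lemma ler_norm_sum_support {R : numDomainType} {F : nat -> R} {a n : nat} {B : R} :
  (forall s, (s < a)%N -> F s = 0) -> (forall s, (a <= s < n)%N -> `|F s| <= B) ->
  `|\sum_(s < n) F s| <= (n - a)%:R * B.
Proof.
move=> F0 FB; have [an | na] := leqP a n; last first.
  rewrite big1 => [|s _]; last exact/F0/(ltn_trans (ltn_ord s) na).
  by rewrite normr0 (eqP (ltnW na)) mul0r.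
rewrite -(big_mkord xpredT) (big_cat_nat (leq0n a) an) /= big1_seq ?add0r
  => [|s].
  rewrite mulr_natl -sumr_const_nat (le_trans (ler_norm_sum _ _ _)) //.
  by apply: ler_sum_nat => s; exact: FB.
by rewrite mem_index_iota => /andP[_ /F0].
Qed.

Lemma sum_mul_delta (R : pzRingType) (F : nat -> R) n j :
  \sum_(t < n) F t * (t == j :> nat)%:R = if (j < n)%N then F j else 0.
Proof. by under eq_bigr do rewrite mulr_natr mulrb; rewrite -big_mkcond big_ord1_eq. Qed.

Lemma cvgr_dist_le_cvg0 {R : realFieldType} {T : Type} {F : set_system T}
    {FF : Filter F} (u e : T -> R) (l : R) :
  (\forall t \near F, `|u t - l| <= e t) -> e @ F --> 0 -> u @ F --> l.
Proof.
move=> ule e0; apply: (squeeze_cvgr (f := fun t => l - e t) (h := fun t => l + e t)).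
- by apply: filterS ule => t; rewrite ler_distl.
- by rewrite -[l in _ --> l]subr0; apply: cvgB => //; exact: cvg_cst.
- by rewrite -[l in _ --> l]addr0; apply: cvgD => //; exact: cvg_cst.
Qed.

Section sum_integrals.
Context {d} {T : measurableType d} {R : realType}.
Context {mu : {measure set T -> \bar R}} {D : set T} (mD : measurable D).
Context {I : Type} {F : I -> T -> R}.
Hypothesis intF : forall i, mu.-integrable D (EFin \o F i).

Lemma integrable_sum_EFin (s : seq I) :
  mu.-integrable D (EFin \o (fun x => \sum_(i <- s) F i x)).
Proof.
apply: eq_integrable (integrable_sum mD s (fun i _ => intF i)) => // x _.
by rewrite sumEFin.
Qed.

Lemma Rintegral_sum (s : seq I) :
  \int[mu]_(x in D) (\sum_(i <- s) F i x) = \sum_(i <- s) \int[mu]_(x in D) F i x.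
Proof.
elim: s => [|i s IH].
  by under eq_Rintegral do rewrite big_nil; rewrite Rintegral_cst // mul0r big_nil.
rewrite big_cons -IH -RintegralD //; last exact: integrable_sum_EFin.
by apply: eq_Rintegral => x _; rewrite big_cons.
Qed.

End sum_integrals.

(** * Measures with a density *)

Section density.
Context {d} {T : measurableType d} {R : realType}.
Context {mu nu : {measure set T -> \bar R}} {w : T -> R}.
Hypothesis mw : measurable_fun setT w.
Hypothesis w_ge0 : forall x, 0 <= w x.
Hypothesis nuE : forall E, measurable E -> nu E = (\int[mu]_(x in E) (w x)%:E)%E.
Local Open Scope ereal_scope.
Import HBNNSimple.

Lemma integral_density_nnsfun (h : {nnsfun T >-> R}) :
  \int[mu]_x ((h x)%:E * (w x)%:E) = \int[nu]_x (h x)%:E.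
Proof.
have mEw : measurable_fun [set: T] (fun x => (w x)%:E) by exact/measurable_EFinP.
rewrite integralT_nnsfun sintegralE.
transitivity (\int[mu]_x
    \sum_(r \in range h) (r * \1_(h @^-1` [set r]) x)%:E * (w x)%:E).
  apply: eq_integral => x _; rewrite fimfunE -fsumEFin // ge0_mule_fsuml //.
  by move=> r; rewrite EFinM nnfun_muleindic_ge0.
rewrite ge0_integral_fsum //; first last.
- move=> r x _; rewrite mule_ge0 ?lee_fin //.
  by rewrite -lee_fin EFinM nnfun_muleindic_ge0.
- move=> r; apply: emeasurable_funM => //; apply/measurable_EFinP.
  exact/measurable_funM.
apply: eq_fsbigr => r /set_mem [x _ <-].
under eq_integral do rewrite EFinM -muleA.
rewrite ge0_integralZl // ?lee_fin //; last first.
- by move=> y _; rewrite mule_ge0 ?lee_fin.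
- by apply: emeasurable_funM => //; exact/measurable_EFinP.
congr (_ * _); rewrite nuE // [RHS]integral_mkcond; apply: eq_integral => y _.
by rewrite epatch_indic muleC.
Qed.

Lemma ge0_integral_density (f : T -> \bar R) :
  (forall x, 0 <= f x) -> measurable_fun setT f ->
  \int[mu]_x (f x * (w x)%:E) = \int[nu]_x f x.
Proof.
move=> f_ge0 mf; pose h := nnsfun_approx measurableT mf.
have hf x : (EFin \o h n) x @[n --> \oo] --> f x by exact: cvg_nnsfun_approx.
have mh n : measurable_fun setT (EFin \o h n) by exact/measurable_EFinP.
have nd_h x : {homo (fun n => (EFin \o h n) x) : a b / (a <= b)%N >-> a <= b}.
  by move=> a b ab; rewrite lee_fin; exact/lefP/nd_nnsfun_approx.
have mEw : measurable_fun [set: T] (fun x => (w x)%:E) by exact/measurable_EFinP.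
transitivity (limn (fun n => \int[mu]_x ((EFin \o h n) x * (w x)%:E))).
  rewrite -monotone_convergence //; first last.
  - by move=> x _ a b ab; apply: lee_wpmul2r; [rewrite lee_fin | exact: nd_h].
  - by move=> n x _; rewrite mule_ge0 ?lee_fin.
  - by move=> n; exact: emeasurable_funM.
  apply: eq_integral => x _; apply/esym/cvg_lim => //.
  exact: cvgeZr.
under eq_fun do rewrite integral_density_nnsfun.
rewrite -monotone_convergence //.
- by apply: eq_integral => x _; apply/cvg_lim/hf.
- by move=> n x _; rewrite lee_fin.
- by move=> x _; exact: nd_h.
Qed.

Lemma integrable_density (f : T -> R) : nu.-integrable setT (EFin \o f) ->
  mu.-integrable setT (EFin \o (fun x => f x * w x)%R).
Proof.
move=> /integrableP[/measurable_EFinP mf fi]; apply/integrableP; split.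
  by apply/measurable_EFinP; exact: measurable_funM.
have absM x : `|(f x * w x)%:E| = `|(f x)%:E| * (w x)%:E.
  by rewrite EFinM abseM (@gee0_abs _ (w x)%:E) ?lee_fin.
under eq_integral => x _ do rewrite absM.
by rewrite ge0_integral_density //; apply: measurableT_comp => //; exact/measurable_EFinP.
Qed.

Lemma Rintegral_density (f : T -> R) : nu.-integrable setT (EFin \o f) ->
  (\int[mu]_x (f x * w x) = \int[nu]_x f x)%R.
Proof.
move=> fi; have /integrableP[mf _] := fi.
have posM x : (EFin \o (fun y => f y * w y)%R)^\+ x = (EFin \o f)^\+ x * (w x)%:E.
  by rewrite !funeposE /= -!EFin_max -EFinM maxr_pMl ?mul0r.
have negM x : (EFin \o (fun y => f y * w y)%R)^\- x = (EFin \o f)^\- x * (w x)%:E.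
  by rewrite !funenegE /= -!EFin_max -EFinM maxr_pMl ?mul0r ?mulNr.
rewrite /Rintegral integralE [in RHS]integralE.
under eq_integral do rewrite posM.
under [X in _ - X]eq_integral do rewrite negM.
rewrite !ge0_integral_density //.
- exact: measurable_funeneg.
- exact: measurable_funepos.
Qed.

End density.

Lemma integrable_horner (R : realType)
    (nu : {measure set measurableTypeR R -> \bar R}) (g : {poly R}) :
  (forall k, nu.-integrable setT (fun y : measurableTypeR R => ((y : R) ^+ k)%:E)) ->
  nu.-integrable setT (EFin \o (fun y : measurableTypeR R => g.[y])).
Proof.
move=> nu_mom.
apply: (eq_integrable measurableT
  (EFin \o fun y : measurableTypeR R => \sum_(k < size g) g`_k * y ^+ k)).
- by move=> y _; rewrite /= -horner_coef.
apply: integrable_sum_EFin => // k.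
by apply: (eq_integrable _ _ _ _ (integrableZl measurableT g`_k (nu_mom k))) => // y _;
  rewrite EFinM.
Qed.

Section path.
Variables (r : nat) (i : nat -> 'I_r).

Lemma msize_pathidx l : msize (pathidx i l) = l.
Proof.
rewrite /msize /pathidx exchange_big /= -[l in RHS]card_ord -sum1_card.
apply: eq_bigr => k _; rewrite (bigD1 (i k)) //= eqxx big1 // => j.
by rewrite eq_sym => /negbTE ->.
Qed.

Lemma leq_pathidx l m s : (l <= m)%N -> (pathidx i l s <= pathidx i m s)%N.
Proof. by move=> lm; rewrite /pathidx -(subnKC lm) big_split_ord leq_addr. Qed.

End path.

(** * Biorthogonality *)

Section multiple_orthogonal_polynomials.
Variables (R : realType) (r : nat).
Local Notation RB := (measurableTypeR R).
Variables (mu : {measure set RB -> \bar R}) (muj : 'I_r -> {measure set RB -> \bar R}).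
Variable w : 'I_r -> R -> R.
Hypothesis w_meas : forall s, measurable_fun setT (w s : RB -> R).
Hypothesis w_ge0 : forall s y, 0 <= w s y.
Hypothesis mujE : forall s E, measurable E ->
  muj s E = (\int[mu]_(y in E) (w s y)%:E)%E.
Hypothesis muj_mom : forall s k,
  (muj s).-integrable setT (fun y : RB => ((y : R) ^+ k)%:E).
Variables (P : ('I_r -> nat) -> {poly R}) (A : ('I_r -> nat) -> 'I_r -> {poly R}).
Hypothesis P_typeII : forall n, typeII muj n (P n).
Hypothesis A_typeI : forall n, typeI muj n (A n).
Variable i : nat -> 'I_r.

Local Notation p := (pseq P i).
Local Notation q := (qseq A w i).

Definition polyint s (g : {poly R}) : R := \int[muj s]_y g.[y].

Lemma polyint_is_linear s : scalar (polyint s).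
Proof.
move=> a g h; rewrite /polyint.
under eq_Rintegral do rewrite hornerD.
rewrite RintegralD //; try exact: integrable_horner.
under eq_Rintegral do rewrite hornerZ.
by rewrite RintegralZl //; exact: integrable_horner.
Qed.

HB.instance Definition _ s :=
  GRing.isLinear.Build R {poly R} R *%R (polyint s) (polyint_is_linear s).

Lemma integral_horner s g : (\int[muj s]_y (g.[y])%:E)%E = (polyint s g)%:E.
Proof.
by rewrite fineK //; apply: integrable_fin_num => //; exact: integrable_horner.
Qed.

Lemma polyint_typeII n s k : (k < n s)%N -> polyint s ('X^k * P n) = 0.
Proof.
move=> kn; have [_ _ /(_ s k kn) orth] := P_typeII n.
rewrite /polyint /Rintegral -[RHS]/(fine 0) -orth; congr fine.
by apply: eq_integral => y _; rewrite /= hornerM hornerXn.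
Qed.

Lemma polyint_typeI n k : (k < msize n)%N ->
  \sum_(s < r) polyint s ('X^k * A n s) = (k == (msize n).-1)%:R.
Proof.
move=> kn; have [_ /(_ k kn)] := A_typeI n.
rewrite (eq_bigr (fun s => (polyint s ('X^k * A n s))%:E)) => [|s _].
  by rewrite sumEFin => -[->]; case: eqP.
rewrite -integral_horner; apply: eq_integral => y _.
by rewrite hornerM hornerXn.
Qed.

Lemma size_pseq l : size (p l) = l.+1.
Proof. by have [_ -> _] := P_typeII (pathidx i l); rewrite msize_pathidx. Qed.

Lemma pseq_monic l : p l \is monic.
Proof. by have [] := P_typeII (pathidx i l). Qed.

(* The integral [\int g q_l dmu], read through the densities (see
   [Rintegral_mul_qseq]). *)
Definition qint l (g : {poly R}) : R :=
  \sum_(s < r) polyint s (g * A (pathidx i l.+1) s).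

Lemma qint_is_linear l : scalar (qint l).
Proof.
move=> a g h; rewrite /qint mulr_sumr -big_split; apply: eq_bigr => s _ /=.
by rewrite mulrDl -scalerAl linearP.
Qed.

HB.instance Definition _ l :=
  GRing.isLinear.Build R {poly R} R *%R (qint l) (qint_is_linear l).

Lemma qint_Xn l k : (k <= l)%N -> qint l 'X^k = (k == l)%:R.
Proof. by move=> kl; rewrite /qint polyint_typeI msize_pathidx. Qed.

Lemma qint_pseq m l : qint l (p m) = (m == l)%:R.
Proof.
have [lm | ml] := ltnP l m.
  rewrite gtn_eqF // /qint big1 // => s _.
  rewrite -[A _ s]coefK poly_def mulr_sumr linear_sum big1 // => k _.
  rewrite -scalerAr linearZ /= [p m * _]mulrC polyint_typeII ?mulr0 //.
  have [sizeA _] := A_typeI (pathidx i l.+1).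
  by apply: leq_trans (ltn_ord k) (leq_trans (sizeA s) _); exact: leq_pathidx.
have -> : p m = \sum_(k < m.+1) (p m)`_k *: 'X^k.
  by rewrite -poly_def -(size_pseq m) coefK.
rewrite linear_sum (eq_bigr (fun k : 'I_m.+1 => (p m)`_k * (k == l :> nat)%:R))
    => [|k _]; last by rewrite linearZ /= qint_Xn // -ltnS (leq_trans (ltn_ord k)).
rewrite sum_mul_delta ltnS; case: eqP => [-> | /eqP ml_neq].
  by rewrite leqnn; have /monicP := pseq_monic l; rewrite lead_coefE size_pseq.
by rewrite leqNgt ltn_neqAle ml_neq ml.
Qed.

Lemma mul_qseqE (g : {poly R}) l y :
  g.[y] * q l y = \sum_(s < r) (g * A (pathidx i l.+1) s).[y] * w s y.
Proof.
by rewrite /qseq /Qfun mulr_sumr; apply: eq_bigr => s _; rewrite hornerM mulrA.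
Qed.

Lemma integrable_mul_qseq (g : {poly R}) l :
  mu.-integrable setT (EFin \o (fun y : RB => g.[y] * q l y)).
Proof.
apply: (eq_integrable measurableT (EFin \o fun y : RB =>
  \sum_(s < r) (g * A (pathidx i l.+1) s).[y] * w s y)) => [y _|].
  by rewrite /= mul_qseqE.
apply: integrable_sum_EFin => // s.
exact/(integrable_density (w_meas s) (w_ge0 s) (mujE s))/integrable_horner.
Qed.

Lemma Rintegral_mul_qseq (g : {poly R}) l : \int[mu]_y (g.[y] * q l y) = qint l g.
Proof.
under eq_Rintegral do rewrite mul_qseqE.
rewrite Rintegral_sum //; last first.
  by move=> s; exact/(integrable_density (w_meas s) (w_ge0 s) (mujE s))/integrable_horner.
apply: eq_bigr => s _.
exact/(Rintegral_density (w_meas s) (w_ge0 s) (mujE s))/integrable_horner.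
Qed.

(** * Multiplication by a polynomial in the basis [(p_t)] *)

Variable J : nat -> nat -> R.
Hypothesis J_hessenberg : forall l k, (l.+1 < k)%N -> J l k = 0.
Hypothesis mulX_pseq : forall l, 'X * p l = \sum_(k < l.+2) J l k *: p k.
Hypothesis J_band_bounded : forall L, exists B, forall a b,
  (a <= b + L)%N -> (b <= a + L)%N -> `|J a b| <= B.

(* The entry [(k, t)] of [J ^ m]; the sum may stop at [s < k + m] since
   [(J ^ m.-1)_(k,s) = 0] for [s >= k + m] ([Jpow_eq0]). *)
Fixpoint Jpow m k t : R :=
  if m is m'.+1 then \sum_(s < k + m) Jpow m' k s * J s t else (t == k)%:R.

Lemma Jpow_eq0 m k t : (k + m < t)%N -> Jpow m k t = 0.
Proof.
elim: m t => [|m IH] t /=; first by rewrite addn0 => /gtn_eqF ->.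
move=> kmt; rewrite big1 // => s _.
by rewrite J_hessenberg ?mulr0 //; have := ltn_ord s; lia.
Qed.

Lemma mulX_pseq_widen l N : (l.+2 <= N)%N -> 'X * p l = \sum_(k < N) J l k *: p k.
Proof.
move=> lN; rewrite mulX_pseq (sumr_widen (F := fun k => J l k *: p k) lN) // => k lk.
by rewrite J_hessenberg ?scale0r.
Qed.

Lemma mulXn_pseq m k : 'X^m * p k = \sum_(t < k + m.+1) Jpow m k t *: p t.
Proof.
elim: m => [|m IH].
  rewrite mul1r addn1 big_ord_recr /= eqxx scale1r big1 ?add0r // => t _.
  by rewrite ltn_eqF ?scale0r.
rewrite exprS -mulrA IH mulr_sumr.
rewrite (eq_bigr (fun s : 'I_(k + m.+1) =>
  \sum_(t < k + m.+2) (Jpow m k s * J s t) *: p t)) => [|s _]; last first.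
  rewrite -scalerAr (mulX_pseq_widen (l := s) (N := k + m.+2)) ?scaler_sumr.
    by apply: eq_bigr => t _; rewrite scalerA.
  by have := ltn_ord s; lia.
by rewrite exchange_big; apply: eq_bigr => t _; rewrite -scaler_suml.
Qed.

Lemma Jpow_bounded m L : exists B, forall k t, (k <= t + L)%N -> `|Jpow m k t| <= B.
Proof.
elim: m L => [|m IH] L.
  by exists 1 => k t _ /=; case: eqP; rewrite ?normr1 ?normr0.
have [B1 hB1] := IH L.+1; have [B2 hB2] := J_band_bounded (L + m.+1).
have B1_ge0 : 0 <= B1 := le_trans (normr_ge0 _) (hB1 0 0 isT).
have B2_ge0 : 0 <= B2 := le_trans (normr_ge0 _) (hB2 0 0 isT isT).
exists ((L + m.+2)%:R * (B1 * B2)) => k t kt /=.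
apply: le_trans (ler_norm_sum_support (F := fun s => Jpow m k s * J s t)
  (a := t.-1) (B := B1 * B2) _ _) _.
- by move=> s st; rewrite J_hessenberg ?mulr0 //; lia.
- by move=> s /andP[ts sk]; rewrite normrM ler_pM //; [apply: hB1 | apply: hB2]; lia.
- by rewrite ler_wpM2r ?mulr_ge0 // ler_nat; lia.
Qed.

Definition polyJ (f : {poly R}) k t := \sum_(m < size f) f`_m * Jpow m k t.

Lemma polyJ_eq0 (f : {poly R}) k t : (k + size f <= t)%N -> polyJ f k t = 0.
Proof.
move=> kt; rewrite /polyJ big1 // => m _.
by rewrite Jpow_eq0 ?mulr0 //; have := ltn_ord m; lia.
Qed.

Lemma mul_pseq (f : {poly R}) k N : (k + size f <= N)%N ->
  f * p k = \sum_(t < N) polyJ f k t *: p t.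
Proof.
move=> kN; rewrite -{1}[f]coefK poly_def mulr_suml.
rewrite (eq_bigr (fun m : 'I_(size f) =>
  \sum_(t < N) (f`_m * Jpow m k t) *: p t)) => [|m _]; last first.
  rewrite -scalerAl mulXn_pseq (sumr_widen (F := fun t => Jpow m k t *: p t) (N := N));
    last 2 first.
  - by have := ltn_ord m; lia.
  - by move=> t kt; rewrite Jpow_eq0 ?scale0r //; lia.
  by rewrite scaler_sumr; apply: eq_bigr => t _; rewrite scalerA.
by rewrite exchange_big; apply: eq_bigr => t _; rewrite -scaler_suml.
Qed.

Lemma polyJ_bounded (f : {poly R}) :
  exists B, forall k t, (k <= t)%N -> `|polyJ f k t| <= B.
Proof.
have /choice[B hB] := fun m => Jpow_bounded m 0.
exists (\sum_(m < size f) `|f`_m| * B m) => k t kt.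
rewrite (le_trans (ler_norm_sum _ _ _)) // ler_sum // => m _.
by rewrite normrM ler_wpM2l // hB // addn0.
Qed.

Lemma qint_mul_pseq (f : {poly R}) k j : qint j (f * p k) = polyJ f k j.
Proof.
rewrite (@mul_pseq f k (k + size f + j.+1)) ?leq_addr // linear_sum.
under eq_bigr do rewrite linearZ /= qint_pseq.
by rewrite sum_mul_delta addnS ltnS leq_addl.
Qed.

(** * The Christoffel--Darboux error *)

Local Notation K := (CDkernel P A w i).

Lemma Rintegral_CDkernel_mul (f : {poly R}) n x :
  \int[mu]_y (K n x y * K n y x * f.[y]) =
  \sum_(j < n) \sum_(k < n) (p j).[x] * q k x * polyJ f k j.
Proof.
have kernelE y : K n x y * K n y x * f.[y] = \sum_(j < n) \sum_(k < n)
    (p j).[x] * q k x * ((f * p k).[y] * q j y).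
  rewrite /CDkernel -mulrA mulr_suml; apply: eq_bigr => j _ /=.
  rewrite mulr_suml mulr_sumr; apply: eq_bigr => k _ /=.
  by rewrite hornerM; ring.
have term_integrable (jk : 'I_n * 'I_n) : mu.-integrable setT (EFin \o fun y : RB =>
    (p jk.1).[x] * q jk.2 x * ((f * p jk.2).[y] * q jk.1 y)).
  exact: (eq_integrable _ _ _ _
    (integrableZl measurableT _ (integrable_mul_qseq _ _))).
under eq_Rintegral do rewrite kernelE pair_bigA.
rewrite Rintegral_sum // pair_bigA; apply: eq_bigr => -[j k] _ /=.
by rewrite RintegralZl ?Rintegral_mul_qseq ?qint_mul_pseq //; exact: integrable_mul_qseq.
Qed.

Lemma Gop_subE (f : {poly R}) n x : K n x x != 0 ->
  Gop mu P A w i n f x - f.[x] = - \sum_(k < n) \sum_(t < size f)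
    polyJ f k (n + t) * (q k x * (p (n + t)).[x] / K n x x).
Proof.
move=> K_neq0; pose I := \int[mu]_y (K n x y * K n y x * f.[y]).
have expand N k : (k + size f <= N)%N ->
    f.[x] * ((p k).[x] * q k x) = q k x * \sum_(t < N) polyJ f k t * (p t).[x].
  move=> kN; rewrite (mulrC (p k).[x]) mulrCA -hornerM (mul_pseq kN) horner_sum.
  by congr (_ * _); apply: eq_bigr => t _; rewrite hornerZ.
have IE : I = \sum_(k < n) q k x * \sum_(t < n) polyJ f k t * (p t).[x].
  rewrite /I Rintegral_CDkernel_mul exchange_big; apply: eq_bigr => k _ /=.
  by rewrite mulr_sumr; apply: eq_bigr => t _; ring.
have diffE : f.[x] * K n x x - I = \sum_(k < n) \sum_(t < size f)
    polyJ f k (n + t) * (q k x * (p (n + t)).[x]).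
  rewrite IE /CDkernel mulr_sumr -sumrB; apply: eq_bigr => k _.
  rewrite (expand (n + size f)); last by rewrite leq_add2r ltnW.
  rewrite big_split_ord /= mulrDr addrAC subrr add0r.
  by rewrite mulr_sumr; apply: eq_bigr => t _; rewrite mulrCA.
transitivity (- ((f.[x] * K n x x - I) / K n x x)); first by rewrite /Gop -/I; field.
rewrite diffE mulr_suml; congr -%R; apply: eq_bigr => k _.
by rewrite mulr_suml; apply: eq_bigr => t _; rewrite -mulrA.
Qed.

Definition CDedge N n x := \big[Num.max/0]_(n - N <= l < n)
  \big[Num.max/0]_(n <= l' < n + N.+1) (`|q l x * (p l').[x]| / K n x x).

Lemma CDedge_ge0 N n x : 0 <= CDedge N n x.
Proof. exact: bigmax_ge_id. Qed.

Lemma le_CDedge N n x l l' : (n - N <= l < n)%N -> (n <= l' < n + N.+1)%N ->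
  `|q l x * (p l').[x]| / K n x x <= CDedge N n x.
Proof.
move=> hl hl'; rewrite /CDedge.
apply: le_trans (le_bigmax_seq 0 l xpredT _ _ _) => //; last by rewrite mem_index_iota.
by apply: (le_bigmax_seq 0 l' xpredT) => //; rewrite mem_index_iota.
Qed.

Lemma Gop_dist_le (f : {poly R}) N n x B : (size f <= N)%N -> 0 < K n x x ->
  (forall k t, (k <= t)%N -> `|polyJ f k t| <= B) ->
  `|Gop mu P A w i n f x - f.[x]| <= (size f)%:R ^+ 2 * B * CDedge N n x.
Proof.
move=> fN K_gt0 hB; have B_ge0 : 0 <= B := le_trans (normr_ge0 _) (hB 0 0 isT).
rewrite Gop_subE ?gt_eqF // normrN expr2 -!mulrA.
pose T k t := polyJ f k (n + t) * (q k x * (p (n + t)).[x] / K n x x).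
apply: le_trans (ler_norm_sum_support (F := fun k => \sum_(t < size f) T k t)
  (a := n - size f) (B := (size f)%:R * (B * CDedge N n x)) _ _) _.
- move=> k kn; rewrite big1 // => t _.
  by rewrite /T polyJ_eq0 ?mul0r //; lia.
- move=> k /andP[nk kn].
  apply: le_trans (ler_norm_sum_support (F := T k) (a := 0) (B := B * CDedge N n x) _ _) _
    => // [t /andP[_ tf]|].
    rewrite /T normrM ler_pM // ?hB //; first lia.
    rewrite normrM normfV (gtr0_norm K_gt0) le_CDedge //; lia.
  by rewrite subn0.
by rewrite ler_wpM2r ?mulr_ge0 ?CDedge_ge0 // ler_nat; lia.
Qed.

End multiple_orthogonal_polynomials.

Theorem theorem5 (R : realType) (r : nat) (hr : (1 <= r)%N)
  (mu : {measure set (measurableTypeR R) -> \bar R})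
  (muj : 'I_r -> {measure set (measurableTypeR R) -> \bar R})
  (w : 'I_r -> R -> R)
  (hw_meas : forall j : 'I_r,
     measurable_fun setT (w j : measurableTypeR R -> R))
  (hw_ge0 : forall (j : 'I_r) (y : R), 0 <= w j y)
  (hdens : forall (j : 'I_r) (E : set (measurableTypeR R)), measurable E ->
     muj j E = (\int[mu]_(y in E) (w j y)%:E)%E)
  (hmom : forall (j : 'I_r) (k : nat),
     (muj j).-integrable setT (fun y : measurableTypeR R => ((y : R) ^+ k)%:E))
  (hperf : perfect muj)
  (P : ('I_r -> nat) -> {poly R}) (hP : forall n, typeII muj n (P n))
  (A : ('I_r -> nat) -> 'I_r -> {poly R}) (hA : forall n, typeI muj n (A n))
  (i : nat -> 'I_r)
  (J : nat -> nat -> R)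
  (hJ0 : forall l k : nat, (l.+1 < k)%N -> J l k = 0)
  (hJ : forall l : nat,
     'X * pseq P i l = \sum_(k < l.+2) J l k *: pseq P i k)
  (x : R) (hx : in_msupp mu x)
  (ha : forall Rb : nat, exists B : R, forall a b : nat,
     (a <= b + Rb)%N -> (b <= a + Rb)%N -> `|J a b| <= B)
  (hb : \forall n \near \oo, 0 < CDkernel P A w i n x x)
  (hc : forall N : nat, (1 <= N)%N ->
     (fun n : nat =>
        \big[Num.max/0]_(n - N <= l < n)
          \big[Num.max/0]_(n <= l' < n + N.+1)
            (`|qseq A w i l x * (pseq P i l').[x]| / CDkernel P A w i n x x))
       @ \oo --> 0) :
  forall f : {poly R}, (fun n : nat => Gop mu P A w i n f x) @ \oo --> f.[x].
Proof.
move=> f; have [B hB] := polyJ_bounded hJ0 ha f.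
pose C := (size f)%:R ^+ 2 * B.
apply: (cvgr_dist_le_cvg0 (e := fun n => C * CDedge w P A i (size f).+1 n x)).
  apply: filterS hb => n K_gt0.
  exact: (Gop_dist_le hw_meas hw_ge0 hdens hmom hP hA hJ0 hJ (leqnSn _) K_gt0 hB).
by rewrite -(mulr0 C); apply: cvgM; [exact: cvg_cst | exact: hc].
Qed.
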